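(* Let $\mathcal F$ be a family of nonempty subsets of $[r]$ whose building closure $\widehat{\mathcal F}$ contains $[r]$. Then the normal fan of $\Delta_{\widehat{\mathcal F}}$ is a simplicial fan refining the normal fan of $\Delta_{\mathcal F}$ (every cone of the former is contained in a cone of the latter, and both fans have support $\mathbb R^r$); i.e. it is a triangulation of the normal fan of $\Delta_{\mathcal F}$.
   Context: For $F\subseteq[r]$ nonempty, $\Delta_F=\operatorname{conv}\{e_i:i\in F\}\subseteq\mathbb R^r$, and for a family $\mathcal F$, $\Delta_{\mathcal F}=\sum_{F\in\mathcal F}\Delta_F$ (Minkowski sum). The building closure $\widehat{\mathcal F}$ is the smallest family of subsets of $[r]$ containing $\mathcal F$ and all singletons such that $F\cup F'\in\widehat{\mathcal F}$ whenever $F,F'\in\widehat{\mathcal F}$ and $F\cap F'\ne\emptyset$. Normal fans are considered modulo the common lineality line $\mathbb R(1,\dots,1)$. *)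

From HB Require Import structures.
From mathcomp Require Import all_boot all_order all_algebra.
From mathcomp Require Import reals.
Set Implicit Arguments. Unset Strict Implicit. Unset Printing Implicit Defensive.
Import Order.TTheory GRing.Theory Num.Theory.
Local Open Scope ring_scope.

Section Defs.
Variables (R : realType) (r : nat).

Definition dotv (u v : 'rV[R]_r) : R := \sum_(i < r) u 0 i * v 0 i.

Definition ebasis (i : 'I_r) : 'rV[R]_r := delta_mx 0 i.

Definition Delta (F : {set 'I_r}) : 'rV[R]_r -> Prop :=
  fun x => exists lam : 'I_r -> R,
    (forall i, i \in F -> 0 <= lam i) /\ \sum_(i in F) lam i = 1 /\
    x = \sum_(i in F) lam i *: ebasis i.

Definition DeltaFam (FF : {set {set 'I_r}}) : 'rV[R]_r -> Prop :=
  fun x => exists p : {set 'I_r} -> 'rV[R]_r,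
    (forall F, F \in FF -> Delta F (p F)) /\ x = \sum_(F in FF) p F.

Definition building_closed (G : {set {set 'I_r}}) : bool :=
  [forall i : 'I_r, [set i] \in G] &&
  [forall A in G, forall B in G, (A :&: B != set0) ==> (A :|: B \in G)].

Definition building_closure (FF : {set {set 'I_r}}) : {set {set 'I_r}} :=
  \bigcap_(G : {set {set 'I_r}} | (FF \subset G) && building_closed G) G.

Definition face (P : 'rV[R]_r -> Prop) (w : 'rV[R]_r) : 'rV[R]_r -> Prop :=
  fun x => P x /\ forall y, P y -> dotv w y <= dotv w x.

Definition normal_cone (P : 'rV[R]_r -> Prop) (G : 'rV[R]_r -> Prop)
  : 'rV[R]_r -> Prop :=
  fun w => forall x, G x -> face P w x.

(* the cones of the normal fan of P are the normal_cone P (face P w0) for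
   w0 with a nonempty face *)
Definition nonempty_face (P : 'rV[R]_r -> Prop) (w0 : 'rV[R]_r) : Prop :=
  exists x, face P w0 x.

Definition all_ones : 'rV[R]_r := const_mx 1.

(* C is a simplicial cone modulo the lineality line R(1,...,1):
   C = R(1,..,1) + cone(v_1..v_k) with v_1,..,v_k,(1,..,1) linearly independent *)
Definition simplicial_mod_ones (C : 'rV[R]_r -> Prop) : Prop :=
  exists (k : nat) (v : 'I_k -> 'rV[R]_r),
    (forall (c : 'I_k -> R) (d : R),
        \sum_(j < k) c j *: v j + d *: all_ones = 0 ->
        (forall j, c j = 0) /\ d = 0) /\
    (forall w, C w <->
       exists (t : R) (lam : 'I_k -> R),
         (forall j, 0 <= lam j) /\ w = t *: all_ones + \sum_(j < k) lam j *: v j).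

Definition normal_fan_simplicial (P : 'rV[R]_r -> Prop) : Prop :=
  forall w0, nonempty_face P w0 -> simplicial_mod_ones (normal_cone P (face P w0)).

Definition normal_fan_refines (P Q : 'rV[R]_r -> Prop) : Prop :=
  forall w0, nonempty_face P w0 ->
    exists w1, nonempty_face Q w1 /\
      forall w, normal_cone P (face P w0) w -> normal_cone Q (face Q w1) w.

Definition normal_fan_complete (P : 'rV[R]_r -> Prop) : Prop :=
  forall w, exists w0, nonempty_face P w0 /\ normal_cone P (face P w0) w.

End Defs.

From mathcomp Require Import all_boot all_order all_algebra.
From mathcomp Require Import reals.
From mathcomp Require Import zify ring.
Import Order.TTheory GRing.Theory Num.Theory.
Local Open Scope ring_scope.

Set Implicit Arguments.
Unset Strict Implicit.
Unset Printing Implicit Defensive.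

(* The face of a Minkowski sum of simplices Delta_B (B in G) on which w0 is maximal is the sum of
   the faces conv{e_i : i an argmax of w0 on B}; hence w lies in the normal cone of that face iff,
   on every B in G, every argmax of w0 is an argmax of w. Passing to the subfamily FF gives the
   refinement, and each w lies in its own cone. If G is a building set containing [r], call S in G
   saturated when every strictly larger member of G contains a point where w0 beats all of S.
   Saturated sets are nested or disjoint, so each one other than [r] has a smallest saturated strict
   superset p(S). With i_S an argmax of w0 on S, every w in the cone telescopes as
   w(i_[r]) (1,...,1) - sum_S (w(i_p(S)) - w(i_S)) 1_S with nonnegative coefficients, and these
   generators are independent because i_S lies in no smaller saturated set. *)

Lemma ler_sum_eq (R : numDomainType) (I : finType) (A : pred I) (f g : I -> R) :
  (forall i, A i -> f i <= g i) -> \sum_(i | A i) g i <= \sum_(i | A i) f i ->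
  forall i, A i -> f i = g i.
Proof.
move=> lefg lesum i Ai.
have gf_ge0 k : A k -> 0 <= g k - f k by move=> Ak; rewrite subr_ge0 lefg.
have sum_gf0 : \sum_(k | A k) (g k - f k) = 0.
  by apply/le_anti; rewrite sumrB subr_le0 lesum /= -sumrB sumr_ge0.
by apply/eqP; rewrite eq_sym -subr_eq0 (psumr_eq0P gf_ge0 sum_gf0).
Qed.

Section Simplices.
Variables (R : realType) (r : nat).
Implicit Types (v w : 'rV[R]_r) (B : {set 'I_r}).

Lemma dotv_sum (I : finType) (P : pred I) w (f : I -> 'rV[R]_r) :
  dotv w (\sum_(x | P x) f x) = \sum_(x | P x) dotv w (f x).
Proof.
rewrite /dotv; under eq_bigr do rewrite summxE big_distrr.
exact: exchange_big.
Qed.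

Lemma dotvZ w a v : dotv w (a *: v) = a * dotv w v.
Proof. by rewrite /dotv mulr_sumr; apply: eq_bigr => i _; rewrite mxE mulrCA. Qed.

Lemma dotv_ebasis w i : dotv w (ebasis R i) = w 0 i.
Proof.
rewrite /dotv (bigD1 i) //= big1 ?addr0; first by rewrite mxE !eqxx mulr1.
by move=> j /negbTE ji; rewrite mxE ji andbF mulr0.
Qed.

Lemma dotv_convex w B (lam : 'I_r -> R) :
  dotv w (\sum_(i in B) lam i *: ebasis R i) = \sum_(i in B) lam i * w 0 i.
Proof. by rewrite dotv_sum; apply: eq_bigr => i _; rewrite dotvZ dotv_ebasis. Qed.

Definition argmax_in w B i := i \in B /\ forall j, j \in B -> w 0 j <= w 0 i.

Definition argmax_inb w B i := (i \in B) && [forall j in B, w 0 j <= w 0 i].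

Lemma argmax_inP w B i : reflect (argmax_in w B i) (argmax_inb w B i).
Proof. by apply: (iffP andP) => -[iB /forall_inP]. Qed.

Lemma argmax_in_exists w B : B != set0 -> exists i, argmax_in w B i.
Proof.
move=> /set0Pn [i0 i0B]; case: (arg_maxP (fun i => w 0 i) i0B) => i iB maxi.
by exists i; split=> // j /maxi.
Qed.

Lemma argmax_in_eq w B i j : argmax_in w B i -> argmax_in w B j -> w 0 i = w 0 j.
Proof. by move=> [iB maxi] [jB maxj]; apply/le_anti; rewrite maxi ?maxj. Qed.

Definition top_vertex w B : 'rV[R]_r :=
  if [pick i | argmax_inb w B i] is Some i then ebasis R i else 0.

Lemma top_vertexP w B : B != set0 ->
  exists i, argmax_in w B i /\ top_vertex w B = ebasis R i.
Proof.
move=> /(argmax_in_exists w) [i0 maxi0]; rewrite /top_vertex.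
case: pickP => [i /argmax_inP maxi | /(_ i0)]; first by exists i.
by move/argmax_inP: maxi0 => ->.
Qed.

Lemma Delta_ebasis B i : i \in B -> Delta B (ebasis R i).
Proof.
move=> iB; exists (fun k => (k == i)%:R); split=> [k _|]; first by rewrite ler0n.
split; rewrite (bigD1 i) //= eqxx ?scale1r big1 ?addr0 // => k /andP[_ /negbTE ->] //.
by rewrite scale0r.
Qed.

Lemma dotv_Delta_le w B p i : Delta B p -> argmax_in w B i -> dotv w p <= w 0 i.
Proof.
move=> [lam [lam_ge0 [lam1 ->]]] [iB maxi]; rewrite dotv_convex.
rewrite -[w 0 i]mul1r -lam1 mulr_suml.
by apply: ler_sum => k kB; rewrite ler_wpM2l ?lam_ge0 ?maxi.
Qed.

(* A point of Delta B attaining the maximum of w0 is supported on argmaxes of w0, so any w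
   maximized (on B) at every argmax of w0 is constant on its support. *)
Lemma dotv_Delta_argmax w0 w B p i0 i1 :
  Delta B p -> argmax_in w0 B i0 -> dotv w0 p = w0 0 i0 ->
  (forall i, argmax_in w0 B i -> argmax_in w B i) -> argmax_in w B i1 ->
  dotv w p = w 0 i1.
Proof.
move=> [lam [lam_ge0 [lam1 ->]]] maxi0 top_p w0_w maxi1.
rewrite dotv_convex in top_p; rewrite dotv_convex.
have supp_max : forall k, k \in B -> lam k * w0 0 k = lam k * w0 0 i0.
  apply: ler_sum_eq => [j jB|]; first by rewrite ler_wpM2l ?lam_ge0 // maxi0.2.
  by rewrite top_p -mulr_suml lam1 mul1r.
rewrite -[w 0 i1]mul1r -lam1 mulr_suml; apply: eq_bigr => k kB.
have [->|lam_k] := eqVneq (lam k) 0; first by rewrite !mul0r.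
have w0k : w0 0 k = w0 0 i0 by apply: (mulfI lam_k); apply: supp_max.
congr (_ * _); apply: (argmax_in_eq (w0_w k _)) => //.
by split=> // j jB; rewrite w0k; apply: maxi0.2.
Qed.

End Simplices.

Section MinkowskiSum.
Variables (R : realType) (r : nat) (G : {set {set 'I_r}}).
Hypothesis G_neq0 : forall B, B \in G -> B != set0.
Implicit Types (w : 'rV[R]_r) (B : {set 'I_r}).
Local Notation P := (@DeltaFam R r G).

Lemma DeltaFam_vertices (q : {set 'I_r} -> 'rV[R]_r) :
  (forall B, B \in G -> exists i, i \in B /\ q B = ebasis R i) ->
  P (\sum_(B in G) q B).
Proof.
move=> qB; exists q; split=> // B BG.
by have [i [iB ->]] := qB B BG; apply: Delta_ebasis.
Qed.

Lemma dotv_DeltaFam_le w (q : {set 'I_r} -> 'rV[R]_r) y :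
  (forall B, B \in G -> exists i, argmax_in w B i /\ q B = ebasis R i) ->
  P y -> dotv w y <= dotv w (\sum_(B in G) q B).
Proof.
move=> qB [p [pB ->]]; rewrite !dotv_sum; apply: ler_sum => B BG.
have [i [maxi ->]] := qB B BG; rewrite dotv_ebasis.
exact: dotv_Delta_le (pB B BG) maxi.
Qed.

Definition top_point w := \sum_(B in G) top_vertex w B.

Lemma face_top_point w : face P w (top_point w).
Proof.
split=> [|y Py].
  apply: DeltaFam_vertices => B BG.
  by have [i [[iB _] ->]] := top_vertexP w (G_neq0 BG); exists i.
by apply: dotv_DeltaFam_le => // B BG; apply: top_vertexP; apply: G_neq0.
Qed.

Lemma nonempty_face_DeltaFam w : nonempty_face P w.
Proof. by exists (top_point w); apply: face_top_point. Qed.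

Definition argmax_cone w0 w :=
  forall B, B \in G -> forall i, argmax_in w0 B i -> argmax_in w B i.

(* Moving the summand of B in [top_point w0] to another vertex e_j of Delta B keeps a point
   of P, and it stays in the face of w0 exactly when j is an argmax of w0 on B. *)
Lemma argmax_cone_of_normal w0 w :
  normal_cone P (face P w0) w -> argmax_cone w0 w.
Proof.
move=> w_normal B BG i maxi; split=> [|j jB]; first by case: maxi.
pose q k B' := if B' == B then ebasis R k else top_vertex w0 B'.
have q_vertex k : k \in B -> forall B', B' \in G ->
    exists k', k' \in B' /\ q k B' = ebasis R k'.
  move=> kB B' B'G; rewrite /q; case: eqP => [->|_]; first by exists k.
  by have [k' [[k'B _] ->]] := top_vertexP w0 (G_neq0 B'G); exists k'.
have face_qi : face P w0 (\sum_(B' in G) q i B').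
  split; first by apply: DeltaFam_vertices; apply: q_vertex; case: maxi.
  move=> y Py; apply: dotv_DeltaFam_le => // B' B'G; rewrite /q.
  by case: eqP => [->|_]; [exists i | apply: top_vertexP; apply: G_neq0].
have := (w_normal _ face_qi).2 _ (DeltaFam_vertices (q_vertex j jB)).
rewrite !dotv_sum (bigD1 B) //= [leRHS](bigD1 B) //= /q eqxx !dotv_ebasis.
set sj := \sum_(_ in _ | _) _; set si := \sum_(_ in _ | _) _.
have -> : sj = si by apply: eq_bigr => B' /andP[_ /negbTE ->].
by rewrite lerD2r.
Qed.

Lemma normal_of_argmax_cone w0 w :
  argmax_cone w0 w -> normal_cone P (face P w0) w.
Proof.
move=> w0_w x [[p [pB ->]] max_x]; split=> [|y Py]; first by exists p.
apply: (le_trans (dotv_DeltaFam_le (q := top_vertex w) _ Py)).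
  by move=> B BG; apply: top_vertexP; apply: G_neq0.
have top_p B : B \in G -> dotv w0 (p B) = dotv w0 (top_vertex w0 B).
  move: B; apply: ler_sum_eq; last by rewrite -!dotv_sum; exact: max_x (face_top_point w0).1.
  move=> B BG; have [k [maxk ->]] := top_vertexP w0 (G_neq0 BG).
  by rewrite dotv_ebasis; apply: dotv_Delta_le (pB B BG) maxk.
rewrite !dotv_sum le_eqVlt; apply/orP; left; apply/eqP; apply: eq_bigr => B BG.
have [i0 [maxi0 top_i0]] := top_vertexP w0 (G_neq0 BG).
have [i1 [maxi1 ->]] := top_vertexP w (G_neq0 BG).
rewrite dotv_ebasis; apply/esym; apply: (dotv_Delta_argmax (pB B BG) maxi0) => //.
  by rewrite top_p // top_i0 dotv_ebasis.
exact: w0_w.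
Qed.

Lemma normal_coneE w0 w : normal_cone P (face P w0) w <-> argmax_cone w0 w.
Proof. by split; [apply: argmax_cone_of_normal | apply: normal_of_argmax_cone]. Qed.

Lemma DeltaFam_fan_complete : normal_fan_complete P.
Proof. by move=> w; exists w; split; [apply: nonempty_face_DeltaFam | move=> x]. Qed.

End MinkowskiSum.

Lemma DeltaFam_fan_refines (R : realType) (r : nat) (G FF : {set {set 'I_r}}) :
  (forall B, B \in G -> B != set0) -> (forall B, B \in FF -> B != set0) ->
  FF \subset G -> normal_fan_refines (@DeltaFam R r G) (DeltaFam FF).
Proof.
move=> G_neq0 FF_neq0 /subsetP FF_G w0 _.
exists w0; split=> [|w]; first exact: nonempty_face_DeltaFam.
by rewrite !normal_coneE // => w0_w B /FF_G; apply: w0_w.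
Qed.

Lemma simplicial_mod_ones_ext (R : realType) (r : nat) (C1 C2 : 'rV[R]_r -> Prop) :
  (forall w, C1 w <-> C2 w) -> simplicial_mod_ones C1 -> simplicial_mod_ones C2.
Proof. by move=> C12 [k [v [v_free C1E]]]; exists k, v; split=> // w; rewrite -C12. Qed.

Section BuildingCone.
Variables (R : realType) (r : nat) (G : {set {set 'I_r}}) (w0 : 'rV[R]_r).
Hypothesis G_neq0 : forall B, B \in G -> B != set0.
Hypothesis GU : forall A B, A \in G -> B \in G -> A :&: B != set0 -> A :|: B \in G.
Hypothesis G1 : forall i, [set i] \in G.
Hypothesis GT : [set: 'I_r] \in G.
Implicit Types (w : 'rV[R]_r) (B S T U : {set 'I_r}).

Definition saturated S := (S \in G) && [forall B in G, (S \proper B) ==>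
  [exists k in B, [forall j in S, w0 0 j < w0 0 k]]].

Lemma saturatedG S : saturated S -> S \in G. Proof. by case/andP. Qed.

Lemma saturated_neq0 S : saturated S -> S != set0.
Proof. by move/saturatedG; apply: G_neq0. Qed.

Lemma saturatedP S B : saturated S -> B \in G -> S \proper B ->
  exists2 k, k \in B & forall j, j \in S -> w0 0 j < w0 0 k.
Proof.
case/andP=> _ /forall_inP satS BG SB.
have /exists_inP [k kB /forall_inP beat] := implyP (satS B BG) SB.
by exists k.
Qed.

Lemma saturatedT : saturated [set: 'I_r].
Proof.
by rewrite /saturated GT; apply/forall_inP => B _; rewrite properE subsetT andbF.
Qed.

Lemma saturated_argmax_notin S T i :
  saturated S -> saturated T -> T \proper S -> argmax_in w0 S i -> i \notin T.
Proof.
move=> satS satT TS [iS maxi]; apply/negP => iT.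
have [k kS beat] := saturatedP satT (saturatedG satS) TS.
by have := beat i iT; rewrite ltNge maxi.
Qed.

Lemma saturated_sub S T : saturated T -> S \in G -> S :&: T != set0 ->
  (forall j, j \in S -> exists2 t, t \in T & w0 0 j <= w0 0 t) -> S \subset T.
Proof.
move=> satT SG ST dominated.
have UG : S :|: T \in G by apply: GU => //; apply: saturatedG.
have [TU|] := boolP (T \proper S :|: T).
  have [k /setUP [kS|kT] beat] := saturatedP satT UG TU.
    by have [t tT le_kt] := dominated k kS; have := beat t tT; rewrite ltNge le_kt.
  by have := beat k kT; rewrite ltxx.
by rewrite properEneq subsetUr andbT negbK => /eqP ->; apply: subsetUl.
Qed.

Lemma saturated_laminar S T : saturated S -> saturated T -> S :&: T != set0 ->
  (S \subset T) || (T \subset S).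
Proof.
move=> satS satT ST.
have [a [aS maxa]] := argmax_in_exists w0 (saturated_neq0 satS).
have [b [bT maxb]] := argmax_in_exists w0 (saturated_neq0 satT).
have [le_ab|lt_ba] := leP (w0 0 a) (w0 0 b); apply/orP; [left|right].
  apply: saturated_sub (saturatedG satS) ST _ => // j jS.
  by exists b => //; apply: le_trans le_ab; apply: maxa.
apply: saturated_sub (saturatedG satT) _ _ => // [|j jT]; first by rewrite setIC.
by exists a => //; apply: le_trans (ltW lt_ba); apply: maxb.
Qed.

Lemma saturated_argmax_proper S U p : saturated S -> saturated U ->
  argmax_in w0 S p -> p \in U -> U != S -> S \proper U.
Proof.
move=> satS satU maxp pU US.
have SU : S :&: U != set0 by apply/set0Pn; exists p; rewrite inE pU maxp.1.
case/orP: (saturated_laminar satS satU SU) => [sub|sub]; first by rewrite properEneq eq_sym US.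
have : U \proper S by rewrite properEneq US.
by move/(saturated_argmax_notin satS satU)/(_ maxp); rewrite pU.
Qed.

Definition nested := [set S | saturated S & S != [set: 'I_r]].

Lemma nested_saturated S : S \in nested -> saturated S.
Proof. by rewrite inE => /andP[]. Qed.

Definition parent S := [arg min_(U < [set: 'I_r] | saturated U && (S \proper U)) #|U|].

Lemma parentP S : S \in nested ->
  [/\ saturated (parent S), S \proper parent S &
      forall U, saturated U -> S \proper U -> parent S \subset U].
Proof.
rewrite inE => /andP [satS ST]; rewrite /parent; case: arg_minnP.
  by rewrite saturatedT properT.
move=> Pa /andP [satPa SPa] minPa; split=> // U satU SU.
have PaU : Pa :&: U != set0.
  have [a aS] := set0Pn _ (saturated_neq0 satS); apply/set0Pn; exists a.
  by rewrite inE (subsetP (proper_sub SPa)) ?(subsetP (proper_sub SU)).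
case/orP: (saturated_laminar satPa satU PaU) => // UPa.
have /eqP <- // : Pa == U by rewrite eq_sym eqEcard UPa minPa ?satU.
Qed.

Definition indicator S : 'rV[R]_r := \row_i (i \in S)%:R.

Lemma argmax_coneD w w' :
  argmax_cone G w0 w -> argmax_cone G w0 w' -> argmax_cone G w0 (w + w').
Proof.
move=> w0_w w0_w' B BG i maxi; have [iB maxw] := w0_w B BG i maxi.
by split=> // j jB; rewrite !mxE lerD ?maxw ?(w0_w' B BG i maxi).2.
Qed.

Lemma argmax_coneZ a w : 0 <= a -> argmax_cone G w0 w -> argmax_cone G w0 (a *: w).
Proof.
move=> a_ge0 w0_w B BG i maxi; have [iB maxw] := w0_w B BG i maxi.
by split=> // j jB; rewrite !mxE ler_wpM2l ?maxw.
Qed.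

Lemma argmax_cone_ones t : argmax_cone G w0 (t *: all_ones R r).
Proof. by move=> B BG i [iB _]; split=> // j jB; rewrite !mxE. Qed.

Lemma argmax_cone_Nindicator S : saturated S -> argmax_cone G w0 (- indicator S).
Proof.
move=> satS B BG i [iB maxi]; split=> // j jB; rewrite !mxE lerN2.
have [iS|] := boolP (i \in S); last by rewrite ler0n.
have [//|jS] := boolP (j \in S).
have UG : S :|: B \in G.
  by apply: GU => //; [apply: saturatedG | apply/set0Pn; exists i; rewrite inE iS].
have SU : S \proper S :|: B.
  by rewrite properE subsetUl; apply/subsetPn; exists j; rewrite // inE jB orbT.
have [k /setUP [kS|kB] beat] := saturatedP satS UG SU.
  by have := beat k kS; rewrite ltxx.
by have := beat i iS; rewrite ltNge maxi.
Qed.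

Lemma card_proper_co (S T : {set 'I_r}) : S \proper T -> (r - #|T| < r - #|S|)%N.
Proof. by move/proper_card; have := max_card T; rewrite card_ord; lia. Qed.

Lemma setT_co_card0 S : (r - #|S| <= 0)%N -> S = [set: 'I_r].
Proof. by move=> coS; apply/eqP; rewrite eqEcard subsetT cardsT card_ord; lia. Qed.

Section TopValue.
Variable w : 'rV[R]_r.
Hypothesis w0_w : argmax_cone G w0 w.

(* Well defined because w is constant on the argmaxes of w0 on each S in G. *)
Definition top_value S :=
  if [pick k | argmax_inb w0 S k] is Some k then w 0 k else 0.

Lemma top_valueE S i : S \in G -> argmax_in w0 S i -> top_value S = w 0 i.
Proof.
move=> SG maxi; rewrite /top_value; case: pickP => [k /argmax_inP maxk|/(_ i)].
  exact: argmax_in_eq (w0_w SG maxk) (w0_w SG maxi).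
by move/argmax_inP: maxi => ->.
Qed.

Lemma top_value_le S T : S \in G -> T \in G -> S \subset T -> top_value S <= top_value T.
Proof.
move=> SG TG /subsetP ST.
have [k maxk] := argmax_in_exists w0 (G_neq0 SG).
have [k' maxk'] := argmax_in_exists w0 (G_neq0 TG).
rewrite (top_valueE SG maxk) (top_valueE TG maxk').
by apply: (w0_w TG maxk').2; apply: ST; case: maxk.
Qed.

Lemma nested_sub_parent S U : S \in nested -> U \in nested ->
  (S \subset U) && (U != S) = (parent S \subset U).
Proof.
move=> SN UN; have [satPa SPa minPa] := parentP SN.
apply/idP/idP => [/andP [SU US]|PaU].
  by apply: minPa; [apply: nested_saturated | rewrite properEneq eq_sym US].
rewrite (subset_trans (proper_sub SPa) PaU) /=; apply: contraTneq PaU => ->.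
by move: SPa; rewrite properE => /andP[].
Qed.

Lemma top_value_telescope n S : (r - #|S| <= n)%N -> saturated S ->
  \sum_(U in nested | S \subset U) (top_value (parent U) - top_value U) =
  top_value [set: 'I_r] - top_value S.
Proof.
have no_nested_supT : \sum_(U in nested | [set: 'I_r] \subset U)
    (top_value (parent U) - top_value U) = 0.
  by rewrite big_pred0 // => U; rewrite inE subTset; case: eqP; rewrite ?andbF.
elim: n S => [|n IH] S coS satS.
  by rewrite (setT_co_card0 coS) subrr no_nested_supT.
have [->|ST] := eqVneq S [set: 'I_r]; first by rewrite subrr no_nested_supT.
have SN : S \in nested by rewrite inE satS ST.
have [satPa SPa _] := parentP SN.
rewrite (bigD1 S) ?SN ?subxx //=.
rewrite (eq_bigl (fun U => (U \in nested) && (parent S \subset U))) => [|U].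
  rewrite IH //; first by ring.
  by rewrite -ltnS (leq_trans (card_proper_co SPa)).
by rewrite -andbA; case: (boolP (U \in nested)) => // UN; apply: nested_sub_parent.
Qed.

Lemma saturated_cover i : exists T, saturated T /\ argmax_in w0 T i.
Proof.
pose Q B := (B \in G) && argmax_inb w0 B i.
have Qi : Q [set i].
  by rewrite /Q G1; apply/argmax_inP; split=> [|j /set1P ->]; rewrite ?set11.
case: (arg_maxnP (fun B => #|B|) Qi) => T /andP [TG /argmax_inP maxi] maxT.
exists T; split=> //; rewrite /saturated TG; apply/forall_inP => B BG; apply/implyP => TB.
apply: contraT; rewrite negb_exists_in => /forall_inP not_beaten.
suff /maxT : Q B by move=> /=; rewrite leqNgt proper_card.
rewrite /Q BG; apply/argmax_inP; split=> [|k kB]; first exact: (subsetP (proper_sub TB)) _ maxi.1.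
have := not_beaten k kB; rewrite negb_forall_in => /exists_inP [j jT]; rewrite -leNgt => le_kj.
exact: le_trans le_kj (maxi.2 j jT).
Qed.

Lemma argmax_cone_decomp : w = top_value [set: 'I_r] *: all_ones R r +
  \sum_(U in nested) (top_value (parent U) - top_value U) *: - indicator U.
Proof.
apply/rowP => i; rewrite !mxE summxE mulr1.
have [T [satT maxi]] := saturated_cover i.
have nested_i U : U \in nested -> (i \in U) = (T \subset U).
  move=> /nested_saturated satU; apply/idP/idP => [iU|/subsetP]; last by apply; case: maxi.
  have [-> //|UT] := eqVneq U T.
  exact: proper_sub (saturated_argmax_proper satT satU maxi iU UT).
have -> : \sum_(U in nested) ((top_value (parent U) - top_value U) *: - indicator U) 0 i =
    - \sum_(U in nested | T \subset U) (top_value (parent U) - top_value U).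
  rewrite -sumrN big_mkcondr /=; apply: eq_bigr => U UN.
  by rewrite -nested_i // !mxE; case: (i \in U) => /=; ring.
rewrite (@top_value_telescope r) ?leq_subr // (top_valueE (saturatedG satT) maxi).
ring.
Qed.

End TopValue.

Lemma nested_free k (f : 'I_k -> {set 'I_r}) (c : 'I_k -> R) (d : R) :
  injective f -> (forall j, f j \in nested) ->
  \sum_(j < k) c j *: - indicator (f j) + d *: all_ones R r = 0 ->
  (forall j, c j = 0) /\ d = 0.
Proof.
move=> f_inj f_nested comb0.
have satf j : saturated (f j) by apply: nested_saturated.
have coord0 p : d = \sum_(j < k) c j * (p \in f j)%:R.
  move/rowP/(_ p): comb0; rewrite !mxE summxE mulr1.
  under eq_bigr do rewrite !mxE mulrN.
  by rewrite sumrN addrC => /subr0_eq.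
have [p0 maxp0] := argmax_in_exists w0 (G_neq0 GT).
have d0 : d = 0.
  rewrite (coord0 p0) big1 // => j _.
  have := saturated_argmax_notin saturatedT (satf j); rewrite properT.
  move/(_ p0); have := f_nested j; rewrite inE => /andP [_ ->] /(_ isT maxp0).
  by move/negbTE ->; rewrite mulr0.
split=> //.
suff c0 n j : (r - #|f j| <= n)%N -> c j = 0 by move=> j; apply: (c0 r); rewrite leq_subr.
elim: n j => [|n IH] j coj.
  by move: (f_nested j); rewrite inE (setT_co_card0 coj) eqxx andbF.
have [p maxp] := argmax_in_exists w0 (saturated_neq0 (satf j)).
have := coord0 p; rewrite d0 (bigD1 j) //= maxp.1 mulr1 big1 ?addr0 => [<- //|j' j'j].
have [pj'|] := boolP (p \in f j'); last by rewrite mulr0.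
have jj' : f j \proper f j'.
  apply: saturated_argmax_proper (satf j) (satf j') maxp pj' _.
  by apply: contraNneq j'j => /f_inj ->.
by rewrite (IH j') ?mul0r // -ltnS (leq_trans (card_proper_co jj')).
Qed.

Lemma argmax_cone_simplicial : simplicial_mod_ones (argmax_cone G w0).
Proof.
exists #|nested|, (fun j => - indicator (enum_val j)); split.
  by move=> c d; apply: nested_free; [apply: enum_val_inj | apply: enum_valP].
move=> w; split=> [w0_w|[t [lam [lam_ge0 ->]]]].
  exists (top_value w [set: 'I_r]).
  exists (fun j => top_value w (parent (enum_val j)) - top_value w (enum_val j)).
  split=> [j|].
    have [satPa SPa _] := parentP (enum_valP j).
    rewrite subr_ge0 top_value_le ?saturatedG ?proper_sub //.
    exact: nested_saturated (enum_valP j).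
  rewrite {1}(argmax_cone_decomp w0_w); congr (_ + _).
  exact: (big_enum_val
    (fun U => (top_value w (parent U) - top_value w U) *: - indicator U)).
apply: argmax_coneD; first exact: argmax_cone_ones.
apply: (big_ind (argmax_cone G w0)); [|exact: argmax_coneD|move=> j _].
  by move=> B _ i [iB _]; split=> // j _; rewrite !mxE.
by apply: argmax_coneZ => //; apply/argmax_cone_Nindicator/nested_saturated/enum_valP.
Qed.

End BuildingCone.

Lemma DeltaFam_fan_simplicial (R : realType) (r : nat) (G : {set {set 'I_r}}) :
  (forall B, B \in G -> B != set0) -> building_closed G -> [set: 'I_r] \in G ->
  normal_fan_simplicial (@DeltaFam R r G).
Proof.
move=> G_neq0 /andP [/forallP G1 /forall_inP GU] GT w0 _.
apply: (simplicial_mod_ones_ext (C1 := argmax_cone G w0)).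
  by move=> w; rewrite normal_coneE.
apply: argmax_cone_simplicial => // A B AG BG AB.
by move/forall_inP: (GU A AG) => /(_ B BG) /implyP; apply.
Qed.

Section BuildingClosure.
Variables (r : nat) (FF : {set {set 'I_r}}).

Lemma sub_building_closure : FF \subset building_closure FF.
Proof. by apply/subsetP => B BF; apply/bigcapP => G /andP [/subsetP /(_ B BF)]. Qed.

Lemma building_closure_closed : building_closed (building_closure FF).
Proof.
apply/andP; split.
  by apply/forallP => i; apply/bigcapP => G /and3P [_ /forallP /(_ i)].
apply/forall_inP => A /bigcapP AG; apply/forall_inP => B /bigcapP BG.
apply/implyP => AB; apply/bigcapP => G GF; have /and3P [_ _ /forall_inP GU] := GF.
by move/forall_inP: (GU A (AG G GF)) => /(_ B (BG G GF)) /implyP; apply.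
Qed.

(* The nonempty subsets of [r] form a building set containing FF. *)
Lemma building_closure_neq0 :
  (forall F, F \in FF -> F != set0) -> forall B, B \in building_closure FF -> B != set0.
Proof.
move=> FF_neq0 B /bigcapP /(_ [set B : {set 'I_r} | B != set0]); rewrite inE; apply.
apply/and3P; split; first by apply/subsetP => F FF_F; rewrite inE FF_neq0.
  by apply/forallP => i; rewrite inE; apply/set0Pn; exists i; rewrite inE.
apply/forall_inP => A; rewrite inE => /set0Pn [a aA]; apply/forall_inP => B' _.
by apply/implyP => _; rewrite inE; apply/set0Pn; exists a; rewrite inE aA.
Qed.

End BuildingClosure.

Theorem corollary3p15 (R : realType) (r : nat) (FF : {set {set 'I_r}})
  (hne : forall F, F \in FF -> F != set0)
  (hfull : [set: 'I_r] \in building_closure FF) :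
  let P := @DeltaFam R r (building_closure FF) in
  let Q := @DeltaFam R r FF in
  normal_fan_simplicial P /\ normal_fan_refines P Q /\
  normal_fan_complete P /\ normal_fan_complete Q.
Proof.
move=> P Q; have closure_neq0 := building_closure_neq0 hne.
split; first exact: DeltaFam_fan_simplicial (building_closure_closed FF) hfull.
split; first exact: DeltaFam_fan_refines (sub_building_closure FF).
by split; apply: DeltaFam_fan_complete.
Qed.
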